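(* The growth-rate of the family of NSG-compositions with maximum $5$ having a unique part equal to $5$ is at most the growth-rate $\gamma_4$ of the family of NSG-compositions with maximum $4$.
   Context: An NSG-composition is a composition $x_1+\cdots+x_{m-1}$ of positive integers satisfying $x_{s+t}\le x_s+x_t$ and $x_{m-s-t}\le x_{m-s}+x_{m-t}+1$ for all $s,t\ge1$, $s+t<m$ (equivalently, the Kunz vector of a numerical semigroup of multiplicity $m$); its genus is $\sum x_j$ and its maximum is $\max_j x_j$. The growth-rate of a family is $\limsup_{g\to\infty}a_g^{1/g}$ with $a_g$ the number of members of genus $g$. *)

From mathcomp Require Import all_boot all_order all_algebra.
From mathcomp Require Import all_classical all_reals all_analysis.
Set Implicit Arguments. Unset Strict Implicit. Unset Printing Implicit Defensive.

(* A composition x_1 + ... + x_{m-1} is represented by the list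
   s = [:: x_1; ...; x_{m-1}], so m = (size s).+1.  Parts are 1-indexed. *)
Definition part (s : seq nat) (j : nat) : nat := nth 0 s j.-1.

Definition is_NSG (s : seq nat) : bool :=
  let m := (size s).+1 in
  all (fun x => 0 < x) s &&
  all (fun a => all (fun b =>
        (a + b < m) ==>
        ((part s (a + b) <= part s a + part s b) &&
         (part s (m - a - b) <= part s (m - a) + part s (m - b) + 1)))
      (iota 1 (size s))) (iota 1 (size s)).

Definition genus (s : seq nat) : nat := sumn s.
Definition maxpart (s : seq nat) : nat := \max_(x <- s) x.

(* Number of NSG-compositions of genus g satisfying P.  A composition of
   genus g has at most g parts, each at most g, so it is encoded (uniquely)
   as an n-tuple over 'I_g.+1 for some n <= g. *)
Definition family_count (P : seq nat -> bool) (g : nat) : nat :=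
  \sum_(n < g.+1)
    #|[set x : n.-tuple 'I_g.+1 |
        let s := map (@nat_of_ord _) (val x) in
        [&& is_NSG s, genus s == g & P s]]|.

Definition growth_rate (R : realType) (a : nat -> nat) : \bar R :=
  limn_esup (fun g => (((a g)%:R : R) `^ (g%:R^-1))%:E).

Definition max_k (k : nat) (s : seq nat) : bool := maxpart s == k.
Definition max5_unique5 (s : seq nat) : bool :=
  (maxpart s == 5) && (count_mem 5 s == 1).

From mathcomp Require Import all_boot all_order all_algebra.
From mathcomp Require Import all_classical all_reals all_analysis.
From mathcomp Require Import lra zify.

(* Proposition 11.2: let a_g count the NSG-compositions of genus g with
   maximum 5 and a single part equal to 5, and b_g those with maximum 4.
   Lowering the unique 5 of such a composition to 4 yields an NSG-composition
   of genus g - 1 with maximum 4 (lowering every part to at most c keeps the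
   NSG inequalities, whose sides are all positive), and the original one is
   recovered from the lowered one together with the position of the 5.  As a
   composition of genus g - 1 has at most g - 1 parts, a_(g+1) <= g * b_g.
   A polynomial factor does not change exponential growth, so the growth rate
   of a is at most that of b. *)

Lemma size_le_genus (s : seq nat) : all (fun x => 0 < x) s -> size s <= genus s.
Proof. by elim: s => //= x s IH /andP[hx /IH]; rewrite /genus /=; lia. Qed.

Lemma part_map_minn (c : nat) (s : seq nat) (j : nat) :
  part (map (minn c) s) j = minn c (part s j).
Proof.
rewrite /part; have [jlt|jge] := ltnP j.-1 (size s); first by rewrite (nth_map 0).
by rewrite !nth_default ?size_map // minn0.
Qed.

(* Capping all parts at c >= 1 preserves the NSG inequalities: an inequality
   with a capped part on the right holds since its left side is at most c. *)
Lemma is_NSG_capped (c : nat) (s : seq nat) : 0 < c -> is_NSG s -> is_NSG (map (minn c) s).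
Proof.
move=> c_gt0 /andP[spos sub]; rewrite /is_NSG size_map.
have tpos : all (fun x => 0 < x) (map (minn c) s).
  by apply/allP => _ /mapP[x /(allP spos) x_gt0 ->]; rewrite leq_min c_gt0.
have part_pos k : 0 < k < (size s).+1 -> 0 < part s k.
  case: k => // k /= ks; apply: (allP spos); exact: mem_nth.
rewrite tpos; apply/allP => a ha; apply/allP => b hb; apply/implyP => hab.
have /andP[sub1 sub2] := implyP (allP (allP sub a ha) b hb) hab.
move: ha hb; rewrite !mem_iota => ha hb.
have := part_pos a; have := part_pos b.
have := part_pos ((size s).+1 - a); have := part_pos ((size s).+1 - b).
rewrite !part_map_minn; lia.
Qed.

Lemma max5_unique5_split (s : seq nat) : max5_unique5 s ->
  exists l r, s = l ++ 5 :: r /\ all (fun x => x <= 4) (l ++ r).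
Proof.
case/andP => /eqP smax /eqP s5.
have s_has5 : 5 \in s by rewrite -has_pred1 has_count s5.
move: smax s5; case/splitPr: s_has5 => l r smax s5; exists l, r; split => //.
apply/allP => z zlr.
have z_le5 : z <= 5.
  rewrite -smax; apply: (@leq_bigmax_seq _ _ xpredT id) => //.
  by move: zlr; rewrite !mem_cat inE => /orP[] ->; rewrite ?orbT.
have z_neq5 : z != 5.
  apply: contra_eqN s5 => /eqP z5; rewrite count_cat /= addnCA -count_cat.
  by rewrite add1n eqSS -lt0n -has_count has_pred1 -z5.
lia.
Qed.

Lemma map_minn_small (c : nat) (s : seq nat) : all (fun x => x <= c) s -> map (minn c) s = s.
Proof. by move=> /allP sc; apply: map_id_in => x /sc; rewrite minnC => /minn_idPl. Qed.

Lemma lower_unique5 (l r : seq nat) :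
  is_NSG (l ++ 5 :: r) -> all (fun x => x <= 4) (l ++ r) ->
  [&& is_NSG (l ++ 4 :: r), (genus (l ++ 4 :: r)).+1 == genus (l ++ 5 :: r)
    & max_k 4 (l ++ 4 :: r)].
Proof.
move=> hN small; have small4 : all (fun x => x <= 4) (l ++ 4 :: r).
  by move: small; rewrite !all_cat /= => /andP[-> ->].
apply/and3P; split.
- have -> : l ++ 4 :: r = map (minn 4) (l ++ 5 :: r).
    move: small; rewrite all_cat => /andP[sl sr].
    by rewrite map_cat /= !map_minn_small.
  exact: is_NSG_capped.
- by rewrite /genus !sumn_cat /= !addnS.
- rewrite /max_k /maxpart eqn_leq; apply/andP; split.
    by apply/bigmax_leqP_seq => i /(allP small4).
  by apply: (@leq_bigmax_seq _ _ xpredT id 4) => //; rewrite mem_cat inE eqxx orbT.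
Qed.

Definition decode {K n : nat} (x : n.-tuple 'I_K) : seq nat := map (@nat_of_ord _) (val x).

Definition encode (K n : nat) (s : seq nat) : n.-tuple 'I_K.+1 :=
  [tuple inord (nth 0 s i) | i < n].

Lemma encodeK (K n : nat) (s : seq nat) : size s = n -> all (fun x => x <= K) s ->
  decode (encode K n s) = s.
Proof.
move=> sz sK; apply: (@eq_from_nth _ 0); first by rewrite size_map size_tuple.
move=> i; rewrite size_map size_tuple => ilt.
rewrite (nth_map ord0) ?size_tuple // -[i]/(nat_of_ord (Ordinal ilt)) -tnth_nth.
by rewrite tnth_mktuple inordK // ltnS; apply: (allP sK); rewrite mem_nth ?sz.
Qed.

Lemma decode_inj (K n : nat) : injective (@decode K n).
Proof. by move=> x y /(inj_map val_inj) /val_inj. Qed.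

Definition family_set (P : seq nat -> bool) (g n : nat) : {set n.-tuple 'I_g.+1} :=
  [set x | [&& is_NSG (decode x), genus (decode x) == g & P (decode x)]].

Lemma family_countE (P : seq nat -> bool) (g : nat) :
  family_count P g = \sum_(n < g.+1) #|family_set P g n|.
Proof. by []. Qed.

Lemma family_set_too_long (P : seq nat -> bool) (g : nat) : #|family_set P g g.+1| = 0.
Proof.
apply: eq_card0 => x; rewrite !inE; apply/negP => /and3P[/andP[xpos _] /eqP xg _].
by move: (size_le_genus _ xpos); rewrite xg size_map size_tuple ltnn.
Qed.

Definition insert5 {g n : nat} (p : 'I_n * n.-tuple 'I_g.+1) : n.-tuple 'I_g.+2 :=
  encode g.+1 n (set_nth 0 (decode p.2) p.1 5).

Lemma set_nth_middle (l r : seq nat) (a b : nat) :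
  set_nth 0 (l ++ a :: r) (size l) b = l ++ b :: r.
Proof. by elim: l => //= x l ->. Qed.

Lemma family5_sub (g n : nat) : family_set max5_unique5 g.+1 n \subset
  insert5 @: finset.setX [set: 'I_n] (family_set (max_k 4) g n).
Proof.
apply/fintype.subsetP => x; rewrite inE => /and3P[xN /eqP xg x5].
have [l [r [xE small]]] := max5_unique5_split _ x5.
rewrite xE in xN xg; have /and3P[tN /eqP tg t4] := lower_unique5 _ _ xN small.
have szx : size (l ++ 5 :: r) = n by rewrite -xE size_map size_tuple.
have ln : size l < n by rewrite -szx size_cat /= addnS ltnS leq_addr.
have tK : decode (encode g n (l ++ 4 :: r)) = l ++ 4 :: r.
  apply: encodeK; first by rewrite -szx !size_cat.
  have g4 : 4 <= g by move: xg; rewrite /genus sumn_cat /=; lia.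
  move: small; rewrite !all_cat /= => /andP[sl sr].
  by rewrite g4 (sub_all _ sl) ?(sub_all _ sr) // => y /leq_trans; apply.
apply/imsetP; exists (Ordinal ln, encode g n (l ++ 4 :: r)).
  by rewrite !inE tK tN t4 -(succn_inj (etrans tg xg)) eqxx.
apply: (@decode_inj g.+2 n x); rewrite /insert5 /= tK set_nth_middle -xE encodeK //.
  by rewrite size_map size_tuple.
by apply/allP => _ /mapP[y _ ->]; rewrite -ltnS ltn_ord.
Qed.

Lemma card_family5 (g n : nat) :
  #|family_set max5_unique5 g.+1 n| <= n * #|family_set (max_k 4) g n|.
Proof.
rewrite -[n in n * _]card_ord -[#|'I_n|]cardsT -cardsX.
exact: leq_trans (subset_leq_card (family5_sub g n)) (leq_imset_card _ _).
Qed.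

Lemma count_bound (g : nat) :
  family_count max5_unique5 g.+1 <= g * family_count (max_k 4) g.
Proof.
rewrite !family_countE.
apply: (@leq_trans (\sum_(n < g.+2) n * #|family_set (max_k 4) g n|)).
  by apply: leq_sum => n _; apply: card_family5.
rewrite big_ord_recr /= family_set_too_long muln0 addn0 big_distrr /=.
by apply: leq_sum => n _; rewrite leq_mul2r -ltnS ltn_ord orbT.
Qed.

Import Order.TTheory GRing.Theory Num.Theory.
Local Open Scope ring_scope.

Section GrowthRate.
Variable R : realType.

Lemma bernoulli2 (d : R) (n : nat) : 0 <= d ->
  1 + n%:R * d + (n%:R * (n%:R - 1) / 2) * d ^+ 2 <= (1 + d) ^+ n.
Proof.
move=> d0; elim: n => [|n IH]; first by rewrite !mul0r !addr0 expr0.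
have n_n1 : 0 <= n%:R * (n%:R - 1) :> R.
  by case: n {IH} => [|k]; rewrite ?mul0r // -natr1 addrK mulr_ge0.
have d3 : 0 <= n%:R * (n%:R - 1) / 2 * d ^+ 3 by rewrite mulr_ge0 ?divr_ge0 ?exprn_ge0.
have d1 : 0 <= 1 + d by lra.
rewrite [(1 + d) ^+ n.+1]exprSr; apply: le_trans (ler_wpM2r d1 IH).
rewrite -natr1 /=; rewrite !expr2 !exprS ?expr0 in d3 *; nra.
Qed.

Lemma nat_le_geometric (d : R) : 0 < d ->
  exists K, forall n, (K <= n)%N -> n%:R <= (1 + d) ^+ n.
Proof.
move=> d0; exists (Num.truncn (2 / d ^+ 2)).+2 => -[//|m] Km.
have d2 : 0 < d ^+ 2 by rewrite exprn_gt0.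
have md2 : 2 <= m%:R * d ^+ 2.
  rewrite -ler_pdivrMr //; apply: le_trans (ltW (truncnS_gt _)) _.
  by rewrite ler_nat -ltnS.
apply: le_trans (bernoulli2 d m.+1 (ltW d0)).
have m0 : 0 <= m%:R :> R by [].
rewrite expr2 in md2; rewrite -natr1 addrK expr2; nra.
Qed.

Lemma rootK (x : R) (m : nat) : 0 <= x -> (0 < m)%N -> (x `^ m%:R^-1) ^+ m = x.
Proof.
move=> x0 m0; rewrite -powR_mulrn ?powR_ge0 // -powRrM mulVf ?powRr1 //.
by rewrite pnatr_eq0 -lt0n.
Qed.

Lemma root_le (x c : R) (m : nat) : 0 <= x -> 0 <= c -> (0 < m)%N ->
  x <= c ^+ m -> x `^ m%:R^-1 <= c.
Proof.
by move=> x0 c0 m0 xc; rewrite -(ler_pXn2r m0) ?nnegrE ?powR_ge0 // rootK.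
Qed.

Lemma ereal_le_from_above (X L : \bar R) :
  (forall r : R, (L < r%:E)%E -> (X <= r%:E)%E) -> (X <= L)%E.
Proof.
case: L => [l| |] XL; [|by rewrite leey|].
- case: X XL => [x| |] XL; last by rewrite leNye.
  + rewrite lee_fin leNgt; apply/negP => lx.
    have := XL ((l + x) / 2); rewrite !lte_fin lee_fin; lra.
  + have l_lt : l < l + 1 by lra.
    by have := XL (l + 1); rewrite lte_fin leye_eq => /(_ l_lt).
- case: X XL => [x| |] XL; last by rewrite leNye.
  + by have := XL (x - 1) (ltNyr _); rewrite lee_fin => ?; exfalso; lra.
  + by have := XL 0 (ltNyr _); rewrite leye_eq.
Qed.

Lemma limn_esup_lt_eventually (u : (\bar R)^nat) (x : \bar R) :
  (limn_esup u < x)%E -> exists N, forall n, (N <= n)%N -> (u n < x)%E.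
Proof.
rewrite /limn_esup /limf_esup => /ereal_inf_lt[_ [V [N _ NV] <-] supx].
exists N => n Nn; apply: le_lt_trans supx.
by apply: ereal_sup_ubound; exists n => //; apply: NV.
Qed.

Lemma limn_esup_le_eventually (u : (\bar R)^nat) (x : \bar R) (N : nat) :
  (forall n, (N <= n)%N -> (u n <= x)%E) -> (limn_esup u <= x)%E.
Proof.
move=> ux; apply: (@le_trans _ _ (ereal_sup (u @` [set n : nat | (N <= n)%N]%classic))).
  by apply: ereal_inf_lbound; exists [set n : nat | (N <= n)%N]%classic => //; exists N.
by apply: ge_ereal_sup => _ [n Nn <-]; apply: ux.
Qed.

Lemma root_shift_bound (a b m : nat) (r d : R) : (0 < m)%N -> 0 < d ->
  (a <= m * b)%N -> (b%:R `^ m%:R^-1 < r) -> m.+1%:R <= (1 + d) ^+ m.+1 ->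
  a%:R `^ m.+1%:R^-1 <= (1 + d) * r.
Proof.
move=> m0 d0 ab br md.
have r0 : 0 < r by apply: le_lt_trans br; apply: powR_ge0.
have [b0|b_gt0] := posnP b.
  have -> : a = 0%N by apply/eqP; rewrite -leqn0 -(muln0 m) -b0.
  by rewrite powR0 ?mulr_ge0 ?invr_eq0 ?pnatr_eq0 //; lra.
have b_lt : b%:R < r ^+ m.
  by rewrite -[b%:R](@rootK _ m _ m0) // ltrXn2r ?powR_ge0 // -lt0n.
have r1 : 1 <= r.
  rewrite leNgt; apply/negP => r_lt1.
  have : r ^+ m <= 1 by rewrite exprn_ile1 // ltW.
  have : 1 <= b%:R :> R by rewrite ler1n.
  lra.
apply: root_le => //; first by rewrite mulr_ge0 //; lra.
apply: (@le_trans _ _ (m%:R * b%:R)); first by rewrite -natrM ler_nat.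
apply: (@le_trans _ _ (m.+1%:R * r ^+ m.+1)).
  apply: ler_pM; rewrite ?ler_nat //; apply: le_trans (ltW b_lt) _.
  by rewrite exprSr ler_peMr ?exprn_ge0 //; lra.
by rewrite exprMn ler_wpM2r ?exprn_ge0 //; lra.
Qed.

Lemma growth_rate_le_shift (a b : nat -> nat) :
  (forall g, (a g.+1 <= g * b g)%N) -> (growth_rate R a <= growth_rate R b)%E.
Proof.
move=> ab; apply: ereal_le_from_above => r /limn_esup_lt_eventually[N br].
have r0 : 0 < r by rewrite -lte_fin; apply: le_lt_trans (br N (leqnn N)); rewrite lee_fin powR_ge0.
apply/lee_addgt0Pr => e e0.
have d0 : 0 < e / r by rewrite divr_gt0.
have [K HK] := nat_le_geometric (e / r) d0.
apply: (limn_esup_le_eventually _ _ (maxn N.+2 K)) => n.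
rewrite geq_max => /andP[Nn Kn]; case: n Nn Kn => // m Nm Km.
rewrite -EFinD lee_fin; have -> : r + e = (1 + e / r) * r by rewrite mulrDl divfK ?gt_eqF // mul1r.
apply: root_shift_bound d0 (ab m) _ (HK _ Km); first by lia.
by rewrite -lte_fin; apply: br; lia.
Qed.

End GrowthRate.

Local Open Scope ereal_scope.

Theorem proposition11p2 (R : realType) :
  growth_rate R (family_count max5_unique5) <= growth_rate R (family_count (max_k 4)).
Proof.
exact: (growth_rate_le_shift R (family_count max5_unique5) (family_count (max_k 4)) count_bound).
Qed.
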